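(* Let $n_1,n_2$ be positive integers, ${\bf P}_c=(p_{c1},\dots,p_{ck})$, $c=1,2$, probability vectors, and let $X_{1i},X_{2i}$, $1\le i\le k$, be mutually independent Poisson random variables with means $\lambda_{1i}=n_1p_{1i}$ and $\lambda_{2i}=n_2p_{2i}$ respectively. Define, with $\xi_i=p_{1i}-p_{2i}$, $$f_i(x_1,x_2)=f^*(x_1,x_2)-\xi_i^2-2\xi_i\left(\frac{x_1}{n_1}-\frac{x_2}{n_2}\right)+2\xi_i^2 .$$ Then: (1) $E f_i(X_{1i},X_{2i})=0$ for each $i$; (2) $\mathrm{Cov}\left(\sum_{i=1}^k f_i(X_{1i},X_{2i}),\sum_{i=1}^kX_{ci}\right)=0$ for $c=1,2$; (3) $\mathrm{Var}\left(\sum_{i=1}^k f_i(X_{1i},X_{2i})\right)=\sum_{i=1}^k\mathrm{Var}(f_i(X_{1i},X_{2i}))=2\sum_{i=1}^k\left(\frac{p_{1i}}{n_1}+\frac{p_{2i}}{n_2}\right)^2.$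
   Context: $f^*(x_1,x_2)=\left(\frac{x_1}{n_1}-\frac{x_2}{n_2}\right)^2-\frac{x_1}{n_1^2}-\frac{x_2}{n_2^2}$. *)

From HB Require Import structures.
From mathcomp Require Import all_boot all_order all_algebra.
From mathcomp Require Import all_classical all_reals all_analysis.
Set Implicit Arguments. Unset Strict Implicit. Unset Printing Implicit Defensive.
Import Order.TTheory GRing.Theory Num.Theory.
Local Open Scope classical_set_scope.
Local Open Scope ring_scope.

Definition fstar {R : realType} (n1 n2 : nat) (x1 x2 : R) : R :=
  (x1 / n1%:R - x2 / n2%:R) ^+ 2 - x1 / (n1%:R ^+ 2) - x2 / (n2%:R ^+ 2).

Definition fi {R : realType} (n1 n2 : nat) (p1 p2 : R) (x1 x2 : R) : R :=
  let xi := p1 - p2 in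
  fstar n1 n2 x1 x2 - xi ^+ 2 - 2 * xi * (x1 / n1%:R - x2 / n2%:R)
  + 2 * xi ^+ 2.

Definition mutually_independent {d} {T : measurableType d} {R : realType}
  (P : probability T R) (I : finType) (Y : I -> {RV P >-> nat}) : Prop :=
  forall (J : {set I}) (A : I -> set nat), (forall j, measurable (A j)) ->
    P [set w | forall j, j \in J -> A j (Y j w)] =
    (\prod_(j in J) P (Y j @^-1` A j))%E.

Definition join_fam {d} {T : measurableType d} {R : realType}
  {P : probability T R} (k : nat) (X1 X2 : 'I_k -> {RV P >-> nat}) :
  'I_k + 'I_k -> {RV P >-> nat} :=
  fun j => match j with inl i => X1 i | inr i => X2 i end.

From HB Require Import structures.
From mathcomp Require Import all_boot all_order all_algebra.
From mathcomp Require Import all_classical all_reals all_analysis.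
From mathcomp Require Import measurable_realfun ring.
Import Order.TTheory GRing.Theory Num.Theory.
Local Open Scope classical_set_scope.
Local Open Scope ring_scope.

Set Implicit Arguments. Unset Strict Implicit. Unset Printing Implicit Defensive.

(* Each f_i(X_1i, X_2i) is a polynomial of degree two in a pair of independent
   Poisson counts.  Written as explicit lists of monomials, f_i, f_i X_1i, f_i X_2i
   and f_i^2 have expectations that are finite combinations of the Poisson moments
   E X^n = sum_k S(n, k) a^k (Touchard polynomials, obtained from the factorial
   moments E X(X-1)...(X-r+1) = a^r), and products of two such polynomials in
   different pairs have the product of the expectations.  Independence is only
   applied to monomials, which are nonnegative on counts, so the product formula
   for nonnegative functions of independent nat-valued variables suffices; it is
   proved by expanding one factor at a time as a series over point indicators.
   Since E f_i = 0, all cross terms between different pairs vanish, leaving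
   Cov(S, sum_i X_ci) = sum_i E[f_i X_ci] = 0 and
   Var S = sum_i E[f_i^2] = 2 sum_i (p_1i/n_1 + p_2i/n_2)^2. *)

Section nat_valued.
Context d (T : measurableType d) (R : realType) (P : probability T R).
Local Open Scope ereal_scope.

Lemma measurable_fun_rv_nat (X : {RV P >-> nat}) (f : nat -> R) :
  measurable_fun setT (fun w => f (X w)).
Proof. by apply: measurableT_comp => // _ B _. Qed.

Lemma measurable_preimage_rv_nat (X : {RV P >-> nat}) (A : set nat) :
  measurable (X @^-1` A).
Proof. by rewrite -[X in measurable X]setTI; exact: measurable_funP. Qed.

Lemma nneseries_indic_set1 (u : nat -> R) n : (forall m, 0 <= u m)%R ->
  \sum_(m <oo) (u m)%:E * (\1_[set m] n)%:E = (u n)%:E.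
Proof.
move=> u0; rewrite (@nneseriesD1 _ _ n) //=; last first.
  by move=> m _; rewrite mule_ge0 // lee_fin.
rewrite indicE mem_set // mule1 eseries0 ?adde0 // => m _ /= mn.
by rewrite indicE memNset ?mule0 // => nm; rewrite nm eqxx in mn.
Qed.

Lemma integral_indic_rv_nat (X : {RV P >-> nat}) (A : set nat) :
  \int[P]_w (\1_A (X w))%:E = P (X @^-1` A).
Proof.
rewrite -(setIT (X @^-1` A)) -integral_indic //.
exact: measurable_preimage_rv_nat.
Qed.

Lemma ge0_integral_rv_nat (X : {RV P >-> nat}) (g : nat -> R) :
  (forall m, 0 <= g m)%R ->
  \int[P]_w (g (X w))%:E = \sum_(m <oo) (g m)%:E * P (X @^-1` [set m]).
Proof.
move=> g0.
transitivity (\int[P]_w \sum_(m <oo) (g m)%:E * (\1_[set m] (X w))%:E).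
  by apply: eq_integral => w _; rewrite nneseries_indic_set1.
rewrite integral_nneseries //; last 2 first.
- by move=> m; apply/measurable_funeM/measurable_EFinP/measurable_fun_rv_nat.
- by move=> m w _; rewrite mule_ge0 // lee_fin.
apply: eq_eseriesr => m _; rewrite ge0_integralZl_EFin //.
- by rewrite integral_indic_rv_nat.
- exact/measurable_EFinP/measurable_fun_rv_nat.
Qed.

Lemma measurable_fun_prod_rv_nat (I : finType) (Y : I -> {RV P >-> nat})
    (f : I -> nat -> R) :
  measurable_fun setT (fun w => \prod_j f j (Y j w))%R.
Proof. by apply: measurable_prod => j _; exact: measurable_fun_rv_nat. Qed.

End nat_valued.

Section independent_nat_family.
Context d (T : measurableType d) (R : realType) (P : probability T R).
Context (I : finType) (Y : I -> {RV P >-> nat}).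
Hypothesis indepY : mutually_independent Y.
Local Open Scope ereal_scope.

Lemma prodr_indic_rv (A : I -> set nat) w :
  (\prod_j \1_(A j) (Y j w) : R)%R =
  \1_[set w | forall j, j \in [set: I]%SET -> A j (Y j w)] w.
Proof.
rewrite [RHS]indicE; have [AY|] := pselect (forall j, A j (Y j w)).
  rewrite mem_set => [|j _]; last exact: AY.
  by rewrite big1 // => j _; rewrite indicE mem_set.
move=> /existsNP[j0 nAj0]; rewrite memNset => [|/(_ j0 (finset.in_setT _))//].
by rewrite (bigD1 j0) //= indicE memNset // mul0r.
Qed.

Lemma integral_prod_indic_indep (A : I -> set nat) :
  \int[P]_w (\prod_j \1_(A j) (Y j w))%:E = \prod_j P (Y j @^-1` A j).
Proof.
set E := [set w | forall j, j \in [set: I]%SET -> A j (Y j w)].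
have mE : measurable E.
  rewrite (_ : E = \bigcap_(j in [set: I]) Y j @^-1` A j).
    by apply: fin_bigcap_measurable => // j _; exact: measurable_preimage_rv_nat.
  by apply/seteqP; split => w /= EY j; [move=> _; exact: EY | move=> _; exact: EY].
under eq_integral do rewrite prodr_indic_rv.
rewrite integral_indic // setIT.
transitivity (\prod_(j in [set: I]%SET) P (Y j @^-1` A j)); first exact: indepY.
by apply: eq_bigl => j; rewrite finset.in_setT.
Qed.

(* The factor [j0] is the series of its values times point indicators, and
   every term of that series factorizes by hypothesis. *)
Lemma ge0_integral_prod_expand1 (h : I -> nat -> R) (j0 : I) :
  (forall j m, 0 <= h j m)%R ->
  (forall j, j != j0 -> \int[P]_w (h j (Y j w))%:E < +oo) ->
  (forall m, \int[P]_w (\prod_j (if j == j0 then \1_[set m] else h j) (Y j w))%:E =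
             \prod_j \int[P]_w ((if j == j0 then \1_[set m] else h j) (Y j w))%:E) ->
  \int[P]_w (\prod_j h j (Y j w))%:E = \prod_j \int[P]_w (h j (Y j w))%:E.
Proof.
move=> h0 hfin hm.
pose C w := (\prod_(j | j != j0) h j (Y j w))%R.
pose K := \prod_(j | j != j0) \int[P]_w (h j (Y j w))%:E.
have Kfin : K \is a fin_num.
  apply: prode_fin_num => j j0j; rewrite ge0_fin_numE ?hfin //.
  by apply: integral_ge0 => w _; rewrite lee_fin.
have hm_ge0 m j n : (0 <= (if j == j0 then \1_[set m] else h j) n)%R.
  by case: ifP => _; rewrite ?indicE ?ler0n.
have prod_at_point m w : (\prod_j (if j == j0 then \1_[set m] else h j) (Y j w) =
    \1_[set m] (Y j0 w) * C w)%R.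
  rewrite (bigD1 j0) //= eqxx; congr (_ * _)%R.
  by apply: eq_bigr => j /negbTE ->.
transitivity (\int[P]_w \sum_(m <oo) (h j0 m)%:E *
    (\prod_j (if j == j0 then \1_[set m] else h j) (Y j w))%:E).
  apply: eq_integral => w _; rewrite (bigD1 j0) //=.
  rewrite -(@nneseries_indic_set1 _ (fun m => h j0 m * C w)%R); last first.
    by move=> m; rewrite mulr_ge0 // prodr_ge0.
  apply: eq_eseriesr => m _; rewrite prod_at_point -!EFinM.
  by rewrite -mulrA [(C w * _)%R]mulrC.
rewrite integral_nneseries //; last 2 first.
- move=> m; apply/measurable_funeM/measurable_EFinP.
  exact: (measurable_fun_prod_rv_nat Y (fun j => if j == j0 then \1_[set m] else h j)).
- by move=> m w _; apply: mule_ge0; rewrite lee_fin; [exact: h0 | exact: prodr_ge0].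
transitivity (\sum_(m <oo) (h j0 m)%:E * P (Y j0 @^-1` [set m]) * K).
  apply: eq_eseriesr => m _; rewrite ge0_integralZl_EFin //; last 2 first.
  - by move=> w _; rewrite lee_fin; exact: prodr_ge0.
  - apply/measurable_EFinP.
    exact: (measurable_fun_prod_rv_nat Y (fun j => if j == j0 then \1_[set m] else h j)).
  rewrite hm -muleA (bigD1 j0) //= eqxx integral_indic_rv_nat; congr (_ * (_ * _)).
  by apply: eq_bigr => j /negbTE ->.
rewrite -(fineK Kfin); under eq_eseriesr do rewrite muleC.
rewrite nneseriesZl; last by move=> m _; rewrite mule_ge0 // lee_fin.
by rewrite -ge0_integral_rv_nat // [RHS](bigD1 j0) //= fineK // muleC.
Qed.

Lemma ge0_integral_prod_indep (g : I -> nat -> R) :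
  (forall j m, 0 <= g j m)%R -> (forall j, \int[P]_w (g j (Y j w))%:E < +oo) ->
  \int[P]_w (\prod_j g j (Y j w))%:E = \prod_j \int[P]_w (g j (Y j w))%:E.
Proof.
move=> g0 gfin.
(* Induction on the list [s] of factors already equal to [g j]; the remaining
   factors are indicators, for which the product rule is mutual independence. *)
pose h (s : seq I) (A : I -> set nat) j : nat -> R := if j \in s then g j else \1_(A j).
suff hP s A : \int[P]_w (\prod_j h s A j (Y j w))%:E =
              \prod_j \int[P]_w (h s A j (Y j w))%:E.
  have hg j : h (enum I) (fun=> set0) j = g j by rewrite /h mem_enum.
  have := hP (enum I) (fun=> set0); under eq_integral do under eq_bigr do rewrite hg.
  by under eq_bigr do rewrite hg.
elim: s A => [|j0 s IH] A.
  have -> : h [::] A = fun j => \1_(A j) by [].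
  rewrite integral_prod_indic_indep; apply: eq_bigr => j _.
  by rewrite integral_indic_rv_nat.
have [j0s|j0s] := boolP (j0 \in s).
  suff -> : h (j0 :: s) A = h s A by exact: IH.
  by apply/funext => j; rewrite /h in_cons; case: eqP => // ->; rewrite j0s.
apply: (ge0_integral_prod_expand1 (j0 := j0)) => [j m|j _|m].
- by rewrite /h; case: ifP.
- rewrite /h; case: ifP => _; first exact: gfin.
  rewrite integral_indic_rv_nat (le_lt_trans (probability_le1 _ _)) ?ltry //.
  exact: measurable_preimage_rv_nat.
- have := IH (fun j => if j == j0 then [set m] else A j).
  congr (_ = _); [apply: eq_integral => w _; congr EFin|]; apply: eq_bigr => j _;
    by rewrite /h in_cons; case: eqVneq => [->|]; rewrite ?(negbTE j0s).
Qed.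

End independent_nat_family.

Section stirling.
Local Open Scope nat_scope.

Fixpoint stirling2 (n k : nat) : nat :=
  match n, k with
  | 0, 0 => 1
  | 0, _.+1 | _.+1, 0 => 0
  | n.+1, k.+1 => k.+1 * stirling2 n k.+1 + stirling2 n k
  end.

Lemma stirling2_small n k : n < k -> stirling2 n k = 0.
Proof.
elim: n k => [|n IH] [|k] //= ltnk.
by rewrite !IH ?muln0 // ltnW.
Qed.

Lemma mul_ffact x k : x * x ^_ k = x ^_ k.+1 + k * x ^_ k.
Proof.
have [kx|xk] := leqP k x; last by rewrite !ffact_small ?muln0 // ltnW.
by rewrite ffactnSr [k * _]mulnC -mulnDr subnK // mulnC.
Qed.

Lemma expn_stirling2 x n : x ^ n = \sum_(k < n.+1) stirling2 n k * x ^_ k.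
Proof.
elim: n => [|n IH]; first by rewrite big_ord1 ffactn0.
rewrite expnS IH big_distrr [RHS]big_ord_recl /= add0n.
under eq_bigr do rewrite mulnCA mul_ffact mulnDr.
under [RHS]eq_bigr do rewrite mulnDl.
rewrite !big_split /= addnC; congr (_ + _).
rewrite big_ord_recl [RHS]big_ord_recr /= !add0n (stirling2_small (ltnSn n)).
rewrite muln0 !mul0n muln0 add0n addn0; apply: eq_bigr => i _.
by rewrite /bump leq0n add0n add1n mulnCA mulnA.
Qed.

End stirling.

Definition touchard {R : pzSemiRingType} (a : R) (n : nat) : R :=
  \sum_(k < n.+1) (stirling2 n k)%:R * a ^+ k.

Lemma touchard0 {R : pzSemiRingType} (a : R) : touchard a 0 = 1.
Proof. by rewrite /touchard big_ord1 mul1r. Qed.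

Section poisson_moments.
Context d (T : measurableType d) (R : realType) (P : probability T R).
Variables (X : {RV P >-> nat}) (a : R).
Hypotheses (a_ge0 : 0 <= a)
  (hX : distribution P X = poisson_prob a 0%N :> (set nat -> \bar R)).
Local Open Scope ereal_scope.

Let pmf m : R := (a ^+ m / m`!%:R * expR (- a))%R.

Let pmf_ge0 m : (0 <= pmf m)%R.
Proof. by rewrite mulr_ge0 ?expR_ge0 // divr_ge0 // exprn_ge0. Qed.

Lemma poisson_rv_pmf m : P (X @^-1` [set m]) = (pmf m)%:E.
Proof.
rewrite -[LHS]/(distribution P X [set m]) hX /poisson_prob.
(* [poisson_prob a] is the Dirac mass at 0 unless [0 < a]. *)
case: ifPn => [a_gt0|].
  by rewrite esum_set1 ?lee_fin ?poisson_pmf_ge0 // /poisson_pmf a_gt0.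
rewrite -leNgt => a_le0; rewrite /pmf.
have -> : a = 0%R by apply/eqP; rewrite eq_le a_le0 a_ge0.
rewrite diracE oppr0 expR0 mulr1 expr0n; case: m => [|m] /=.
  by rewrite mem_set // fact0 divr1.
by rewrite memNset // mul0r.
Qed.

Let pmf_sum : \sum_(m <oo) (pmf m)%:E = 1.
Proof.
have := ge0_integral_rv_nat X (fun=> ler01).
rewrite integral_cst //= probability_setT mule1 => ->.
by apply: eq_eseriesr => m _; rewrite mul1e poisson_rv_pmf.
Qed.

Lemma integral_poisson_ffact r : \int[P]_w ((X w) ^_ r)%:R%:E = (a ^+ r)%:E.
Proof.
rewrite (ge0_integral_rv_nat X (g := fun m => (m ^_ r)%:R)) //.
under eq_eseriesr do rewrite poisson_rv_pmf -EFinM.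
rewrite (nneseries_split 0 r); last by move=> m; rewrite lee_fin mulr_ge0.
rewrite add0n big1_seq ?add0e => [|m]; last first.
  by rewrite mem_index_iota => /andP[_ mr]; rewrite ffact_small // mul0r.
rewrite -nneseries_addn; last by move=> m; rewrite lee_fin mulr_ge0.
transitivity (\sum_(m <oo) (a ^+ r)%:E * (pmf m)%:E).
  apply: eq_eseriesr => m _; rewrite -EFinM /pmf exprD -(ffact_fact (leq_addl m r)).
  rewrite addnK natrM; congr EFin; field.
  by rewrite !pnatr_eq0 -!lt0n ffact_gt0 leq_addl fact_gt0.
by rewrite nneseriesZl ?pmf_sum ?mule1 // => m _; rewrite lee_fin.
Qed.

Lemma integral_poisson_expn n : \int[P]_w ((X w)%:R ^+ n)%:E = (touchard a n)%:E.
Proof.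
under eq_integral do rewrite -natrX expn_stirling2 natr_sum -sumEFin.
rewrite ge0_integral_sum //; last first.
  move=> k; apply/measurable_EFinP.
  exact: (measurable_fun_rv_nat X (fun m => (stirling2 n k * m ^_ k)%:R)).
rewrite /touchard -sumEFin; apply: eq_bigr => k _.
under eq_integral do rewrite natrM EFinM.
rewrite ge0_integralZl_EFin //; last first.
  exact/measurable_EFinP/(measurable_fun_rv_nat X (fun m => (m ^_ k)%:R)).
by rewrite EFinM; congr (_ * _); exact: integral_poisson_ffact.
Qed.

End poisson_moments.

Section independent_poisson_family.
Context d (T : measurableType d) (R : realType) (P : probability T R).
Variables (I : finType) (Y : I -> {RV P >-> nat}) (lam : I -> R).
Hypotheses (lam_ge0 : forall j, 0 <= lam j)
  (hY : forall j, distribution P (Y j) = poisson_prob (lam j) 0%N :> (set nat -> \bar R))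
  (indepY : mutually_independent Y).
Local Open Scope ereal_scope.

Lemma integral_poisson_monomial (e : I -> nat) :
  \int[P]_w (\prod_j (Y j w)%:R ^+ e j)%:E = (\prod_j touchard (lam j) (e j))%:E.
Proof.
have moment j := integral_poisson_expn (lam_ge0 j) (hY j) (e j).
rewrite (ge0_integral_prod_indep indepY (g := fun j m => (m%:R ^+ e j)%R)).
- by rewrite -prodEFin; apply: eq_bigr => j _; exact: moment.
- by move=> j m; exact: exprn_ge0.
- by move=> j; rewrite moment ltry.
Qed.

Lemma integrable_poisson_monomial (e : I -> nat) :
  P.-integrable setT (EFin \o (fun w => \prod_j (Y j w)%:R ^+ e j)%R).
Proof.
apply/integrableP; split.
  exact/measurable_EFinP/(measurable_fun_prod_rv_nat Y (fun j m => (m%:R ^+ e j)%R)).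
have mono_ge0 w : (0 <= \prod_j (Y j w)%:R ^+ e j)%R.
  by apply: prodr_ge0 => j _; exact: exprn_ge0.
under eq_integral do rewrite /= ger0_norm //.
by rewrite integral_poisson_monomial ltry.
Qed.

End independent_poisson_family.

Section integral_finite_sums.
Context d (T : measurableType d) (R : realType) (mu : {measure set T -> \bar R}).
Variables (A : Type) (s : seq A).
Local Open Scope ereal_scope.

Lemma integrable_sumr (f : A -> T -> R) :
  (forall a, mu.-integrable setT (EFin \o f a)) ->
  mu.-integrable setT (EFin \o (fun w => \sum_(a <- s) f a w)%R).
Proof.
move=> intf; apply: (eq_integrable measurableT (fun w => \sum_(a <- s) (f a w)%:E)).
  by move=> w _ /=; rewrite sumEFin.
by apply: (integrable_sum measurableT) => a _; exact: intf.
Qed.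

Lemma integral_sumr (f : A -> T -> R) (v : A -> R) :
  (forall a, mu.-integrable setT (EFin \o f a)) ->
  (forall a, \int[mu]_w (f a w)%:E = (v a)%:E) ->
  \int[mu]_w (\sum_(a <- s) f a w)%:E = (\sum_(a <- s) v a)%:E.
Proof.
move=> intf intv; under eq_integral do rewrite -sumEFin.
by rewrite integral_sum // -sumEFin; apply: eq_bigr => a _; exact: intv.
Qed.

Variables (c : A -> R) (f : A -> T -> R).
Hypothesis intf : forall a, mu.-integrable setT (EFin \o f a).

Let intcf a : mu.-integrable setT (EFin \o (fun w => c a * f a w)%R).
Proof. exact: (integrableZl measurableT (c a) (intf a)). Qed.

Lemma integrable_lincomb :
  mu.-integrable setT (EFin \o (fun w => \sum_(a <- s) c a * f a w)%R).
Proof. exact: integrable_sumr intcf. Qed.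

Lemma integral_lincomb (v : A -> R) :
  (forall a, \int[mu]_w (f a w)%:E = (v a)%:E) ->
  \int[mu]_w (\sum_(a <- s) c a * f a w)%:E = (\sum_(a <- s) c a * v a)%:E.
Proof.
move=> intv; apply: integral_sumr intcf _ => a.
rewrite EFinM -intv; under eq_integral do rewrite EFinM.
exact: (integralZl measurableT (intf a)).
Qed.

End integral_finite_sums.

Section bivariate_polynomials.
Variable R : comPzRingType.
Implicit Types (p q : seq (R * nat * nat)) (x y : R).

(* A bivariate polynomial is a list of monomials [(c, i, j)] standing for
   [c * x ^+ i * y ^+ j]. *)
Definition bivar_eval p x y : R := \sum_(m <- p) m.1.1 * (x ^+ m.1.2 * y ^+ m.2).

Definition bivar_mul p q : seq (R * nat * nat) :=
  [seq (m.1.1 * n.1.1, m.1.2 + n.1.2, m.2 + n.2) | m <- p, n <- q].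

Lemma bivar_evalM p q x y :
  bivar_eval (bivar_mul p q) x y = bivar_eval p x y * bivar_eval q x y.
Proof.
rewrite /bivar_eval big_allpairs_dep big_distrl /=; apply: eq_bigr => m _.
by rewrite big_distrr /=; apply: eq_bigr => n _; rewrite !exprD; ring.
Qed.

Lemma bivar_eval_x x y : bivar_eval [:: (1, 1%N, 0%N)] x y = x.
Proof. by rewrite /bivar_eval big_seq1 /= mul1r mulr1. Qed.

Lemma bivar_eval_y x y : bivar_eval [:: (1, 0%N, 1%N)] x y = y.
Proof. by rewrite /bivar_eval big_seq1 /= !mul1r. Qed.

Definition poisson_bivar_mean (a b : R) p : R :=
  \sum_(m <- p) m.1.1 * (touchard a m.1.2 * touchard b m.2).

End bivariate_polynomials.

Lemma prod_if_eq (I : finType) (R : comPzSemiRingType) (F : I -> nat -> R) u r :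
  (forall t, F t 0%N = 1) -> \prod_t F t (if t == u then r else 0%N) = F u r.
Proof.
move=> F0; rewrite (bigD1 u) // eqxx big1 => [|t /negbTE -> //].
by rewrite /= mulr1.
Qed.

Lemma prod_add_disjoint (I : finType) (R : comPzSemiRingType) (F : I -> nat -> R)
    (e1 e2 : I -> nat) :
  (forall t, e1 t = 0%N \/ e2 t = 0%N) -> (forall t, F t 0%N = 1) ->
  \prod_t F t (e1 t + e2 t)%N = \prod_t F t (e1 t) * \prod_t F t (e2 t).
Proof.
move=> e0 F0; rewrite -big_split; apply: eq_bigr => t _.
by case: (e0 t) => ->; rewrite ?add0n ?addn0 F0 /= ?mulr1 ?mul1r.
Qed.

Section poisson_pairs.
Context d (T : measurableType d) (R : realType) (P : probability T R).
Variables (k : nat) (l1 l2 : 'I_k -> R) (X1 X2 : 'I_k -> {RV P >-> nat}).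
Hypotheses (l1_ge0 : forall i, 0 <= l1 i) (l2_ge0 : forall i, 0 <= l2 i)
  (hX1 : forall i, distribution P (X1 i) = poisson_prob (l1 i) 0%N :> (set nat -> \bar R))
  (hX2 : forall i, distribution P (X2 i) = poisson_prob (l2 i) 0%N :> (set nat -> \bar R))
  (indepX : mutually_independent (join_fam X1 X2)).
Local Open Scope ereal_scope.

Let Y := join_fam X1 X2.
Let lam t := match t with inl i => l1 i | inr i => l2 i end.
Let lam_ge0 t : (0 <= lam t)%R. Proof. by case: t. Qed.
Let hY t : distribution P (Y t) = poisson_prob (lam t) 0%N :> (set nat -> \bar R).
Proof. by case: t. Qed.

Let pair_exp (i : 'I_k) (r s : nat) (t : 'I_k + 'I_k) : nat :=
  match t with inl i' => if i' == i then r else 0%N | inr i' => if i' == i then s else 0%N end.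

Let prod_pair_exp (F : 'I_k + 'I_k -> nat -> R) i r s : (forall t, F t 0%N = 1%R) ->
  (\prod_t F t (pair_exp i r s t) = F (inl i) r * F (inr i) s)%R.
Proof.
move=> F0; rewrite big_sumType /= (prod_if_eq (F := fun i => F (inl i))) //.
by rewrite (prod_if_eq (F := fun i => F (inr i))).
Qed.

Let pair_exp_disjoint i j r s r' s' : i != j ->
  forall t, pair_exp i r s t = 0%N \/ pair_exp j r' s' t = 0%N.
Proof.
move=> ij [] t /=; have [->|ti] := eqVneq t i;
  by [right; rewrite (negbTE ij) | left].
Qed.

Let pair_monomialE i r s w :
  ((X1 i w)%:R ^+ r * (X2 i w)%:R ^+ s = \prod_t (Y t w)%:R ^+ pair_exp i r s t :> R)%R.
Proof. by rewrite (prod_pair_exp (F := fun t n => (((Y t w)%:R : R) ^+ n)%R)). Qed.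

Let two_pairs_monomialE i j r s r' s' w : i != j ->
  ((X1 i w)%:R ^+ r * (X2 i w)%:R ^+ s * ((X1 j w)%:R ^+ r' * (X2 j w)%:R ^+ s') =
   \prod_t (Y t w)%:R ^+ (pair_exp i r s t + pair_exp j r' s' t) :> R)%R.
Proof.
move=> ij; rewrite (prod_add_disjoint (F := fun t n => (((Y t w)%:R : R) ^+ n)%R)
  (pair_exp_disjoint r s r' s' ij)) //.
by rewrite -!pair_monomialE.
Qed.

Lemma integrable_pair_monomial i r s :
  P.-integrable setT (EFin \o (fun w => (X1 i w)%:R ^+ r * (X2 i w)%:R ^+ s)%R).
Proof.
apply: eq_integrable (integrable_poisson_monomial lam_ge0 hY indepX (pair_exp i r s)) => //.
by move=> w _ /=; rewrite pair_monomialE.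
Qed.

Lemma integral_pair_monomial i r s :
  \int[P]_w ((X1 i w)%:R ^+ r * (X2 i w)%:R ^+ s)%:E =
  (touchard (l1 i) r * touchard (l2 i) s)%:E.
Proof.
under eq_integral do rewrite pair_monomialE.
rewrite (integral_poisson_monomial lam_ge0 hY indepX).
by rewrite (prod_pair_exp (F := fun t => touchard (lam t))) // => t; exact: touchard0.
Qed.

Lemma integrable_two_pairs_monomial i j r s r' s' : i != j ->
  P.-integrable setT (EFin \o (fun w => (X1 i w)%:R ^+ r * (X2 i w)%:R ^+ s *
                                        ((X1 j w)%:R ^+ r' * (X2 j w)%:R ^+ s'))%R).
Proof.
move=> ij.
apply: eq_integrable (integrable_poisson_monomial lam_ge0 hY indepX
  (fun t => pair_exp i r s t + pair_exp j r' s' t)%N) => //.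
by move=> w _ /=; rewrite two_pairs_monomialE.
Qed.

Lemma integral_two_pairs_monomial i j r s r' s' : i != j ->
  \int[P]_w ((X1 i w)%:R ^+ r * (X2 i w)%:R ^+ s *
             ((X1 j w)%:R ^+ r' * (X2 j w)%:R ^+ s'))%:E =
  (touchard (l1 i) r * touchard (l2 i) s * (touchard (l1 j) r' * touchard (l2 j) s'))%:E.
Proof.
move=> ij; under eq_integral do rewrite two_pairs_monomialE //.
have T0 t : touchard (lam t) 0 = 1%R by exact: touchard0.
rewrite (integral_poisson_monomial lam_ge0 hY indepX).
rewrite (prod_add_disjoint (F := fun t => touchard (lam t))
  (pair_exp_disjoint r s r' s' ij)) //.
by rewrite !(prod_pair_exp (F := fun t => touchard (lam t))).
Qed.

Lemma integrable_pair_poly i (p : seq (R * nat * nat)) :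
  P.-integrable setT (EFin \o (fun w => bivar_eval p (X1 i w)%:R (X2 i w)%:R)%R).
Proof.
apply: eq_integrable (integrable_lincomb p (fun m => m.1.1)
  (fun m => integrable_pair_monomial i m.1.2 m.2)) => //.
Qed.

Lemma integral_pair_poly i (p : seq (R * nat * nat)) :
  \int[P]_w (bivar_eval p (X1 i w)%:R (X2 i w)%:R)%:E =
  (poisson_bivar_mean (l1 i) (l2 i) p)%:E.
Proof.
exact (integral_lincomb p (fun m => m.1.1) (fun m => integrable_pair_monomial i m.1.2 m.2)
  (fun m => integral_pair_monomial i m.1.2 m.2)).
Qed.

Let two_pairs_polyE i j (p q : seq (R * nat * nat)) w :
  (bivar_eval p (X1 i w)%:R (X2 i w)%:R * bivar_eval q (X1 j w)%:R (X2 j w)%:R =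
   \sum_(m <- p) m.1.1 * \sum_(n <- q) n.1.1 *
     ((X1 i w)%:R ^+ m.1.2 * (X2 i w)%:R ^+ m.2 *
      ((X1 j w)%:R ^+ n.1.2 * (X2 j w)%:R ^+ n.2)))%R.
Proof.
rewrite /bivar_eval big_distrl; apply: eq_bigr => m _.
by rewrite !big_distrr; apply: eq_bigr => n _ /=; ring.
Qed.

Lemma integrable_two_pairs_poly i j (p q : seq (R * nat * nat)) : i != j ->
  P.-integrable setT (EFin \o (fun w => bivar_eval p (X1 i w)%:R (X2 i w)%:R *
                                       bivar_eval q (X1 j w)%:R (X2 j w)%:R)%R).
Proof.
move=> ij; apply: eq_integrable (integrable_lincomb p (fun m => m.1.1) (fun m =>
  integrable_lincomb q (fun n => n.1.1) (fun n =>
  integrable_two_pairs_monomial m.1.2 m.2 n.1.2 n.2 ij))) => // w _.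
by rewrite /= two_pairs_polyE.
Qed.

Lemma integral_two_pairs_poly i j (p q : seq (R * nat * nat)) : i != j ->
  \int[P]_w (bivar_eval p (X1 i w)%:R (X2 i w)%:R *
             bivar_eval q (X1 j w)%:R (X2 j w)%:R)%:E =
  (poisson_bivar_mean (l1 i) (l2 i) p * poisson_bivar_mean (l1 j) (l2 j) q)%:E.
Proof.
move=> ij; under eq_integral do rewrite two_pairs_polyE.
rewrite (integral_lincomb p (fun m => m.1.1) (fun m => integrable_lincomb q (fun n => n.1.1)
    (fun n => integrable_two_pairs_monomial m.1.2 m.2 n.1.2 n.2 ij))
  (v := fun m => touchard (l1 i) m.1.2 * touchard (l2 i) m.2 *
                 poisson_bivar_mean (l1 j) (l2 j) q)%R) => [|m].
  by rewrite /poisson_bivar_mean big_distrl; congr EFin; apply: eq_bigr => m _ /=; ring.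
rewrite /poisson_bivar_mean big_distrr; under eq_bigr do rewrite /= mulrCA.
exact (integral_lincomb q (fun n => n.1.1)
  (fun n => integrable_two_pairs_monomial m.1.2 m.2 n.1.2 n.2 ij)
  (fun n => integral_two_pairs_monomial m.1.2 m.2 n.1.2 n.2 ij)).
Qed.

End poisson_pairs.

Section poisson_pair_sums.
Context d (T : measurableType d) (R : realType) (P : probability T R).
Variables (k : nat) (l1 l2 : 'I_k -> R) (X1 X2 : 'I_k -> {RV P >-> nat}).
Hypotheses (l1_ge0 : forall i, 0 <= l1 i) (l2_ge0 : forall i, 0 <= l2 i)
  (hX1 : forall i, distribution P (X1 i) = poisson_prob (l1 i) 0%N :> (set nat -> \bar R))
  (hX2 : forall i, distribution P (X2 i) = poisson_prob (l2 i) 0%N :> (set nat -> \bar R))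
  (indepX : mutually_independent (join_fam X1 X2)).
Local Open Scope ereal_scope.

Let pair_poly (p : seq (R * nat * nat)) i w : R := bivar_eval p (X1 i w)%:R (X2 i w)%:R.
Let mean (p : seq (R * nat * nat)) i : R := poisson_bivar_mean (l1 i) (l2 i) p.

Lemma Lfun1_pair_poly p i : pair_poly p i \in Lfun P 1.
Proof. exact/Lfun1_integrable/(integrable_pair_poly l1_ge0 l2_ge0 hX1 hX2 indepX). Qed.

Lemma expectation_pair_poly p i : 'E_P[pair_poly p i] = (mean p i)%:E.
Proof. by rewrite unlock; exact: (integral_pair_poly l1_ge0 l2_ge0 hX1 hX2 indepX). Qed.

Lemma covariance_pair_poly p q i :
  covariance P (pair_poly p i) (pair_poly q i) =
  (mean (bivar_mul p q) i - mean p i * mean q i)%:E.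
Proof.
have pqE : (pair_poly p i * pair_poly q i)%R = pair_poly (bivar_mul p q) i.
  by apply/funext => w; rewrite /pair_poly bivar_evalM.
by rewrite covarianceE ?pqE ?Lfun1_pair_poly // !expectation_pair_poly.
Qed.

Let integrable_pair_product (p q : seq (R * nat * nat)) i j :
  P.-integrable setT (EFin \o (fun w => pair_poly p i w * pair_poly q j w)%R).
Proof.
have [<-|ij] := eqVneq i j; last exact (integrable_two_pairs_poly l1_ge0 l2_ge0 hX1 hX2 indepX p q ij).
apply: eq_integrable (integrable_pair_poly l1_ge0 l2_ge0 hX1 hX2 indepX i (bivar_mul p q)) => //.
by move=> w _ /=; rewrite bivar_evalM.
Qed.

Let integral_pair_product (p q : seq (R * nat * nat)) i j :
  \int[P]_w (pair_poly p i w * pair_poly q j w)%:E =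
  (if i == j then mean (bivar_mul p q) i else mean p i * mean q j)%:E.
Proof.
have [<-|ij] := eqVneq i j; last exact (integral_two_pairs_poly l1_ge0 l2_ge0 hX1 hX2 indepX p q ij).
under eq_integral do rewrite /pair_poly -bivar_evalM.
exact: integral_pair_poly.
Qed.

Lemma covariance_sum_pair_poly (p q : 'I_k -> seq (R * nat * nat)) :
  (forall i, mean (p i) i = 0%R) ->
  covariance P (fun w => \sum_i pair_poly (p i) i w)%R
               (fun w => \sum_i pair_poly (q i) i w)%R =
  (\sum_i mean (bivar_mul (p i) (q i)) i)%:E.
Proof.
move=> p0.
have intS r : P.-integrable setT (EFin \o (fun w => \sum_i pair_poly (r i) i w)%R).
  by apply: integrable_sumr => i; exact (integrable_pair_poly l1_ge0 l2_ge0 hX1 hX2 indepX i (r i)).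
have STE w : ((\sum_i pair_poly (p i) i w) * (\sum_j pair_poly (q j) j w) =
    \sum_i \sum_j pair_poly (p i) i w * pair_poly (q j) j w)%R.
  by rewrite big_distrl; apply: eq_bigr => i _; rewrite big_distrr.
have intST : P.-integrable setT (EFin \o (fun w =>
    (\sum_i pair_poly (p i) i w) * (\sum_j pair_poly (q j) j w))%R).
  have := integrable_sumr (index_enum 'I_k) (fun i => integrable_sumr (index_enum 'I_k)
    (fun j => integrable_pair_product (p i) (q j) i j)).
  by apply: eq_integrable => // w _ /=; rewrite STE.
rewrite covarianceE; last 3 first.
- exact/Lfun1_integrable/intS.
- exact/Lfun1_integrable/intS.
- exact/Lfun1_integrable/intST.
have -> : 'E_P[(fun w => \sum_i pair_poly (p i) i w)%R] = 0.
  rewrite unlock (integral_sumr (index_enum 'I_k) (fun i => integrable_pair_poly l1_ge0 l2_ge0 hX1 hX2 indepX i (p i))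
    (fun i => integral_pair_poly l1_ge0 l2_ge0 hX1 hX2 indepX i (p i))).
  by rewrite big1 // => i _; exact: p0.
rewrite mul0e sube0 unlock mulrfctE; under eq_integral do rewrite STE.
rewrite (integral_sumr (index_enum 'I_k) (fun i => integrable_sumr (index_enum 'I_k)
    (fun j => integrable_pair_product (p i) (q j) i j))
  (fun i => integral_sumr (index_enum 'I_k) (fun j => integrable_pair_product (p i) (q j) i j)
    (fun j => integral_pair_product (p i) (q j) i j))).
congr EFin; apply: eq_bigr => i _; rewrite (bigD1 i) //= eqxx big1 ?addr0 // => j ji.
by rewrite eq_sym (negbTE ji) p0 mul0r.
Qed.

End poisson_pair_sums.

Section fi_polynomial.
Variables (R : realType) (n1 n2 : nat) (p1 p2 : R).

Definition fi_poly : seq (R * nat * nat) :=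
  let A := n1%:R^-1 in let B := n2%:R^-1 in let xi := p1 - p2 in
  [:: (xi ^+ 2, 0%N, 0%N); (- A ^+ 2 - 2 * xi * A, 1%N, 0%N);
      (2 * xi * B - B ^+ 2, 0%N, 1%N); (A ^+ 2, 2%N, 0%N); (- 2 * A * B, 1%N, 1%N);
      (B ^+ 2, 0%N, 2%N)].

Lemma fi_bivar_eval (x y : R) : fi n1 n2 p1 p2 x y = bivar_eval fi_poly x y.
Proof.
rewrite /fi /fstar /bivar_eval /fi_poly !big_cons big_nil /= -!exprVn.
ring.
Qed.

Hypotheses (n1_gt0 : (0 < n1)%N) (n2_gt0 : (0 < n2)%N).
Let n1_neq0 : n1%:R != 0 :> R. Proof. by rewrite pnatr_eq0 -lt0n. Qed.
Let n2_neq0 : n2%:R != 0 :> R. Proof. by rewrite pnatr_eq0 -lt0n. Qed.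
Let a := n1%:R * p1.
Let b := n2%:R * p2.

Lemma poisson_mean_fi_poly : poisson_bivar_mean a b fi_poly = 0.
Proof.
rewrite /poisson_bivar_mean /fi_poly !big_cons big_nil /=.
rewrite /touchard !big_ord_recr !big_ord0 /=.
by rewrite /a /b; field; rewrite n1_neq0 n2_neq0.
Qed.

Lemma poisson_mean_fi_poly_x :
  poisson_bivar_mean a b (bivar_mul fi_poly [:: (1, 1%N, 0%N)]) = 0.
Proof.
rewrite /poisson_bivar_mean /fi_poly /bivar_mul /= !big_cons big_nil /=.
rewrite /touchard !big_ord_recr !big_ord0 /=.
by rewrite /a /b; field; rewrite n1_neq0 n2_neq0.
Qed.

Lemma poisson_mean_fi_poly_y :
  poisson_bivar_mean a b (bivar_mul fi_poly [:: (1, 0%N, 1%N)]) = 0.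
Proof.
rewrite /poisson_bivar_mean /fi_poly /bivar_mul /= !big_cons big_nil /=.
rewrite /touchard !big_ord_recr !big_ord0 /=.
by rewrite /a /b; field; rewrite n1_neq0 n2_neq0.
Qed.

Lemma poisson_mean_fi_poly_sqr :
  poisson_bivar_mean a b (bivar_mul fi_poly fi_poly) = 2 * (p1 / n1%:R + p2 / n2%:R) ^+ 2.
Proof.
rewrite /poisson_bivar_mean /fi_poly /bivar_mul /= !big_cons big_nil /=.
rewrite /touchard !big_ord_recr !big_ord0 /=.
by rewrite /a /b; field; rewrite n1_neq0 n2_neq0.
Qed.

End fi_polynomial.

Theorem lemma2 (R : realType) (d : measure_display) (T : measurableType d)
  (P : probability T R) (k n1 n2 : nat) (p1 p2 : 'I_k -> R)
  (X1 X2 : 'I_k -> {RV P >-> nat}) :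
  (0 < n1)%N -> (0 < n2)%N ->
  (forall i, 0 <= p1 i) -> \sum_(i < k) p1 i = 1 ->
  (forall i, 0 <= p2 i) -> \sum_(i < k) p2 i = 1 ->
  (forall i, distribution P (X1 i) = poisson_prob (n1%:R * p1 i) 0%N :> (set nat -> \bar R)) ->
  (forall i, distribution P (X2 i) = poisson_prob (n2%:R * p2 i) 0%N :> (set nat -> \bar R)) ->
  mutually_independent (join_fam X1 X2) ->
  let F i := fun w => fi n1 n2 (p1 i) (p2 i) (X1 i w)%:R (X2 i w)%:R in
  let S := fun w => \sum_(i < k) F i w in
  (forall i, ('E_P[F i])%E = 0%E) /\
  covariance P S (fun w => \sum_(i < k) (X1 i w)%:R) = 0%E /\
  covariance P S (fun w => \sum_(i < k) (X2 i w)%:R) = 0%E /\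
  ('V_P[S])%E = (\sum_(i < k) 'V_P[F i])%E /\
  ('V_P[S])%E = (2 * \sum_(i < k) (p1 i / n1%:R + p2 i / n2%:R) ^+ 2)%:E.
Proof.
move=> n1_gt0 n2_gt0 p1_ge0 _ p2_ge0 _ hX1 hX2 indepX F S.
have l1_ge0 i : 0 <= n1%:R * p1 i by rewrite mulr_ge0.
have l2_ge0 i : 0 <= n2%:R * p2 i by rewrite mulr_ge0.
have pairs := covariance_sum_pair_poly l1_ge0 l2_ge0 hX1 hX2 indepX.
pose f i := fi_poly n1 n2 (p1 i) (p2 i).
have mean_f i := poisson_mean_fi_poly (p1 i) (p2 i) n1_gt0 n2_gt0.
have FE i : F i = fun w => bivar_eval (f i) (X1 i w)%:R (X2 i w)%:R.
  by apply/funext => w; rewrite /F fi_bivar_eval.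
have SE : S = fun w => \sum_i bivar_eval (f i) (X1 i w)%:R (X2 i w)%:R.
  by apply/funext => w; apply: eq_bigr => i _; rewrite FE.
split; first by move=> i; rewrite FE (expectation_pair_poly l1_ge0 l2_ge0 hX1 hX2 indepX) mean_f.
split.
  under eq_fun => w do under eq_bigr => i _ do
    rewrite -(bivar_eval_x (X1 i w)%:R (X2 i w)%:R).
  rewrite SE pairs //; congr EFin; apply: big1 => i _; exact: poisson_mean_fi_poly_x.
split.
  under eq_fun => w do under eq_bigr => i _ do
    rewrite -(bivar_eval_y (X1 i w)%:R (X2 i w)%:R).
  rewrite SE pairs //; congr EFin; apply: big1 => i _; exact: poisson_mean_fi_poly_y.
have VS : 'V_P[S] = (\sum_i 2 * (p1 i / n1%:R + p2 i / n2%:R) ^+ 2)%:E.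
  by rewrite /variance SE pairs //; congr EFin; apply: eq_bigr => i _;
    exact: poisson_mean_fi_poly_sqr.
rewrite VS mulr_sumr; split=> //; rewrite -sumEFin; apply: eq_bigr => i _.
rewrite /variance FE (covariance_pair_poly l1_ge0 l2_ge0 hX1 hX2 indepX) mean_f mulr0 subr0.
by rewrite poisson_mean_fi_poly_sqr.
Qed.
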